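(* In a hierarchical tensor factorization with mode tree $\mathcal T$, for any $\nu\in\mathrm{int}(\mathcal T)$, $\nu_c\in C(\nu)$ and $r\in[R_\nu]$: (a) the end tensor obtained by replacing $W^{(\nu)}$ with the matrix whose $r$'th row is $W^{(\nu)}_{r,:}$ and whose other rows are zero (all other weight matrices unchanged) equals $\sigma_{\nu,r}\cdot\mathcal E_{\nu,r}$; and (b) the end tensor obtained by replacing $W^{(\nu_c)}$ with the matrix whose $r$'th column is $W^{(\nu_c)}_{:,r}$ and whose other columns are zero (all other weight matrices unchanged) equals $\sigma_{\nu,r}\cdot\mathcal E_{\nu,r}$.
   Context: Fix $N\in\mathbb N$, $D_1,\dots,D_N\in\mathbb N$; $[K]:=\{1,\dots,K\}$; norms are Frobenius norms; $\otimes$ the tensor product. A mode tree $\mathcal T$ over $[N]$ is a rooted tree whose nodes are labeled by subsets of $[N]$, with exactly $N$ leaves labeled $\{1\},\dots,\{N\}$, and where each interior node's label is the union of its children's labels; nodes are identified with labels, root $[N]$, $\mathrm{int}(\mathcal T)$ interior nodes, $Pa(\nu)$ parent, $C(\nu)$ children (fixed order). A hierarchical tensor factorization has $R_\nu\in\mathbb N$ ($\nu\in\mathrm{int}(\mathcal T)$), $R_{Pa([N])}:=1$, $R_{\{n\}}:=D_n$, weight matrices $W^{(\nu)}\in\mathbb R^{R_\nu\times R_{Pa(\nu)}}$. Intermediate tensors: $\mathcal W^{(\{n\},r)}:=W^{(\{n\})}_{:,r}$; for $\nu\in\mathrm{int}(\mathcal T)\setminus\{[N]\}$ (leaves to root),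 $r\in[R_{Pa(\nu)}]$: $\mathcal W^{(\nu,r)}:=\pi_\nu\big(\sum_{r'=1}^{R_\nu}W^{(\nu)}_{r',r}\bigotimes_{\nu_c\in C(\nu)}\mathcal W^{(\nu_c,r')}\big)$; end tensor $\mathcal W_H:=\pi_{[N]}\big(\sum_{r'=1}^{R_{[N]}}W^{([N])}_{r',1}\bigotimes_{\nu_c\in C([N])}\mathcal W^{(\nu_c,r')}\big)$, where $\pi_\nu$ permutes modes (ordered by children, each child's elements ascending) into ascending order of the elements of $\nu$. The norm of the $(\nu,r)$'th local component is $\sigma_{\nu,r}:=\|W^{(\nu)}_{r,:}\|\prod_{\nu_c\in C(\nu)}\|W^{(\nu_c)}_{:,r}\|$. $\mathcal E_{\nu,r}$ is the end tensor obtained from the same construction except that, for every $r'\in[R_{Pa(\nu)}]$, the tensor produced at node $\nu$ (the end tensor itself if $\nu=[N]$) is replaced by $\pi_\nu\big(\sigma_{\nu,r}^{-1}W^{(\nu)}_{r,r'}\bigotimes_{\nu_c\in C(\nu)}\mathcal W^{(\nu_c,r)}\big)$; $\mathcal E_{\nu,r}:=0$ if $\sigma_{\nu,r}=0$. *)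

From HB Require Import structures.
From mathcomp Require Import all_boot all_order all_algebra.
From Stdlib Require List.
Set Implicit Arguments. Unset Strict Implicit. Unset Printing Implicit Defensive.
Import Order.TTheory GRing.Theory Num.Theory.
Local Open Scope ring_scope.

(* Mode trees over the mode set 'I_N = {0,...,N-1} (0-based modes). *)
Inductive mtree (N : nat) : Type :=
| MLeaf of 'I_N
| MNode of seq (mtree N).
Arguments MLeaf {N}.
Arguments MNode {N}.

Fixpoint label N (t : mtree N) : {set 'I_N} :=
  match t with
  | MLeaf n => [set n]
  | MNode ts =>
      (fix lab (l : seq (mtree N)) : {set 'I_N} :=
         match l with [::] => set0 | c :: l' => label c :|: lab l' end) ts
  end.

Fixpoint leaves N (t : mtree N) : seq 'I_N :=
  match t with
  | MLeaf n => [:: n]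
  | MNode ts =>
      (fix go (l : seq (mtree N)) : seq 'I_N :=
         match l with [::] => [::] | c :: l' => leaves c ++ go l' end) ts
  end.

Fixpoint all_labels N (t : mtree N) : seq {set 'I_N} :=
  match t with
  | MLeaf n => [:: [set n]]
  | MNode ts =>
      label t ::
      (fix go (l : seq (mtree N)) : seq {set 'I_N} :=
         match l with [::] => [::] | c :: l' => all_labels c ++ go l' end) ts
  end.

(* every node built with MNode has at least one child (otherwise it would be
   a leaf not labeled by a singleton) *)
Fixpoint nonempty_nodes N (t : mtree N) : bool :=
  match t with
  | MLeaf _ => true
  | MNode ts =>
      (0 < size ts)%N &&
      (fix go (l : seq (mtree N)) : bool :=
         match l with [::] => true | c :: l' => nonempty_nodes c && go l' end) ts
  end.

(* A mode tree over [N]: exactly N leaves labeled {0},...,{N-1} (each once),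
   interior labels are unions of children labels (built in), and nodes are
   identified with their labels (labels pairwise distinct). *)
Definition mode_tree N (T : mtree N) : Prop :=
  [/\ perm_eq (leaves T) (enum 'I_N), nonempty_nodes T & uniq (all_labels T)].

(* R_nu for a node: D_n for the leaf {n}, Rk nu for an interior node nu *)
Definition node_rank N (D : 'I_N -> nat) (Rk : {set 'I_N} -> nat) (t : mtree N) : nat :=
  match t with MLeaf n => D n | MNode _ => Rk (label t) end.

(* interior nodes (given by their list of children) paired with R_{Pa(nu)} *)
Fixpoint int_nodes N (Rk : {set 'I_N} -> nat) (t : mtree N) (pr : nat)
  : seq (seq (mtree N) * nat) :=
  match t with
  | MLeaf _ => [::]
  | MNode ts =>
      (ts, pr) ::
      (fix go (l : seq (mtree N)) : seq (seq (mtree N) * nat) :=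
         match l with
         | [::] => [::]
         | c :: l' => int_nodes Rk c (Rk (label t)) ++ go l'
         end) ts
  end.

(* Multi-indices: an index in [D_n] for every mode n.  Tensors are functions
   of mode-labeled multi-indices (so the mode permutations pi_nu are built in). *)
Definition mindex N (D : 'I_N -> nat) := forall n : 'I_N, 'I_(D n).

(* Weight matrices: W nu a b is the (a,b) entry of W^(nu) (0-based indices);
   only entries a < R_nu, b < R_{Pa(nu)} are ever used. *)
Definition weights (R : Type) N := {set 'I_N} -> nat -> nat -> R.

Fixpoint tens (R : rcfType) N (D : 'I_N -> nat) (Rk : {set 'I_N} -> nat)
  (W : weights R N) (t : mtree N) (r : nat) (i : mindex D) : R :=
  match t with
  | MLeaf n => W [set n] (i n) r
  | MNode ts =>
      \sum_(r' < Rk (label t))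
        W (label t) r' r *
        (fix prodc (l : seq (mtree N)) : R :=
           match l with [::] => 1 | c :: l' => tens Rk W c r' i * prodc l' end) ts
  end.

(* end tensor W_H  (R_{Pa([N])} = 1, so the root is evaluated at column 0) *)
Definition end_tensor (R : rcfType) N (D : 'I_N -> nat) (Rk : {set 'I_N} -> nat)
  (W : weights R N) (T : mtree N) (i : mindex D) : R :=
  tens Rk W T 0 i.

Fixpoint tens_repl (R : rcfType) N (D : 'I_N -> nat) (Rk : {set 'I_N} -> nat)
  (W : weights R N) (nu : {set 'I_N}) (g : nat -> mindex D -> R)
  (t : mtree N) (r : nat) (i : mindex D) : R :=
  match t with
  | MLeaf n => W [set n] (i n) r
  | MNode ts =>
      if label t == nu then g r i else
      \sum_(r' < Rk (label t))
        W (label t) r' r *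
        (fix prodc (l : seq (mtree N)) : R :=
           match l with [::] => 1 | c :: l' => tens_repl Rk W nu g c r' i * prodc l' end) ts
  end.

Definition row_norm (R : rcfType) N (W : weights R N) (nu : {set 'I_N}) (r p : nat) : R :=
  Num.sqrt (\sum_(j < p) W nu r j ^+ 2).
Definition col_norm (R : rcfType) N (W : weights R N) (mu : {set 'I_N}) (k r : nat) : R :=
  Num.sqrt (\sum_(a < k) W mu a r ^+ 2).

(* sigma_{nu,r} for the interior node nu = MNode cs whose parent has rank pr *)
Definition sigma (R : rcfType) N (D : 'I_N -> nat) (Rk : {set 'I_N} -> nat)
  (W : weights R N) (cs : seq (mtree N)) (pr r : nat) : R :=
  row_norm W (label (MNode cs)) r pr *
  \prod_(c <- cs) col_norm W (label c) (node_rank D Rk c) r.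

Definition Eten (R : rcfType) N (D : 'I_N -> nat) (Rk : {set 'I_N} -> nat)
  (W : weights R N) (T : mtree N) (cs : seq (mtree N)) (pr r : nat)
  (i : mindex D) : R :=
  let s := sigma D Rk W cs pr r in
  if s == 0 then 0 else
  tens_repl Rk W (label (MNode cs))
    (fun r'' j => s^-1 * W (label (MNode cs)) r r'' * \prod_(c <- cs) tens Rk W c r j)
    T 0 i.

Definition keep_row (R : rcfType) N (W : weights R N) (nu : {set 'I_N}) (r : nat)
  : weights R N :=
  fun mu a b => if mu == nu then (if a == r then W mu a b else 0) else W mu a b.

Definition keep_col (R : rcfType) N (W : weights R N) (nu : {set 'I_N}) (r : nat)
  : weights R N :=
  fun mu a b => if mu == nu then (if b == r then W mu a b else 0) else W mu a b.

Arguments sigma {R N} D Rk W cs pr r.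
Arguments Eten {R N} D Rk W T cs pr r i.

(* Node labels are pairwise distinct, so zeroing all rows of W^(nu) but the
   r'th, or all columns of W^(nu_c) but the r'th, leaves the subtrees below nu
   untouched and turns the tensor produced at nu into the local component
   W^(nu)_(r,r'') (x)_c W^(c,r).  Everything above nu is linear in the tensor
   produced at nu, so writing that component as sigma_(nu,r) times the tensor
   used in E_(nu,r) pulls sigma_(nu,r) out of the end tensor.  When
   sigma_(nu,r) = 0 either the row W^(nu)_(r,:) or one of the columns
   W^(c)_(:,r) vanishes, and then so does the local component. *)
From HB Require Import structures.
From mathcomp Require Import all_boot all_order all_algebra.
From Stdlib Require List.
Import Order.TTheory GRing.Theory Num.Theory.
Set Implicit Arguments. Unset Strict Implicit. Unset Printing Implicit Defensive.
Local Open Scope ring_scope.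

Lemma subseq_flatten_map_In (A : Type) (B : eqType) (f : A -> seq B) l x :
  List.In x l -> subseq (f x) (flatten (map f l)).
Proof.
elim: l => //= y l IHl [<-|/IHl sub_fx]; first exact: prefix_subseq.
exact: subseq_trans sub_fx (suffix_subseq _ _).
Qed.

Lemma eq_big_In (R : Type) (idx : R) (op : R -> R -> R) (A : Type) (l : seq A)
    (F G : A -> R) :
  (forall x, List.In x l -> F x = G x) ->
  \big[op/idx]_(x <- l) F x = \big[op/idx]_(x <- l) G x.
Proof.
elim: l => [|x l IHl] FG; first by rewrite !big_nil.
rewrite !big_cons FG /=; last by left.
by rewrite IHl // => y ly; apply: FG; right.
Qed.

Lemma prodf_eq0_sub (R : idomainType) (A : Type) (l : seq A) (F G : A -> R) :
  (forall x, F x = 0 -> G x = 0) ->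
  \prod_(x <- l) F x = 0 -> \prod_(x <- l) G x = 0.
Proof.
move=> FG /eqP; rewrite prodf_seq_eq0 => hasF; apply/eqP; rewrite prodf_seq_eq0.
by apply: sub_has hasF => x /= /eqP /FG ->.
Qed.

Lemma sqrt_sum_sqr_eq0 (R : rcfType) (K : nat) (f : nat -> R) j :
  Num.sqrt (\sum_(k < K) f k ^+ 2) = 0 -> (j < K)%N -> f j = 0.
Proof.
move=> /eqP; rewrite sqrtr_eq0 => sum_le0 ltjK.
have sum_eq0 : \sum_(k < K) f k ^+ 2 = 0.
  by apply/le_anti; rewrite sum_le0 sumr_ge0 // => k _; rewrite sqr_ge0.
have /eqP : f (Ordinal ltjK) ^+ 2 = 0.
  by apply: (psumr_eq0P _ sum_eq0) => // k _; rewrite sqr_ge0.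
by rewrite sqrf_eq0 => /eqP.
Qed.

Lemma sum_ord_delta (V : nmodType) n i (lt_in : (i < n)%N) (F : 'I_n -> V) :
  (forall j : 'I_n, (j != i :> nat) -> F j = 0) -> \sum_(j < n) F j = F (Ordinal lt_in).
Proof.
by move=> F0; rewrite (bigD1 (Ordinal lt_in)) //= big1 ?addr0 // => j /F0.
Qed.

Lemma fix_prod_big (R : pzSemiRingType) (A : Type) (f : A -> R) l :
  (fix prodc (l : seq A) : R :=
     match l with [::] => 1 | c :: l' => f c * prodc l' end) l
  = \prod_(c <- l) f c.
Proof. by elim: l => [|c l /= ->]; rewrite ?big_nil ?big_cons. Qed.

Section ModeTrees.
Variable N : nat.
Implicit Types (t c : mtree N) (cs : seq (mtree N)).

Fixpoint mtree_In_ind (P : mtree N -> Prop) (P_leaf : forall n, P (MLeaf n))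
  (P_node : forall cs, (forall c, List.In c cs -> P c) -> P (MNode cs)) t : P t :=
  match t with
  | MLeaf n => P_leaf n
  | MNode cs => P_node cs ((fix go (l : seq (mtree N)) : forall c, List.In c l -> P c :=
        match l with
        | [::] => fun c cl => False_ind _ cl
        | c' :: l' => fun c cl => match cl with
            | or_introl e => eq_ind c' P (mtree_In_ind P_leaf P_node c') c e
            | or_intror cl' => go l' c cl'
            end
        end) cs)
  end.

Lemma all_labels_node cs :
  all_labels (MNode cs) = label (MNode cs) :: flatten (map (@all_labels N) cs).
Proof. by rewrite /=; congr (_ :: _); elim: cs => //= c cs ->. Qed.

Lemma label_in_all_labels t : label t \in all_labels t.
Proof. by case: t => [n|cs]; rewrite ?all_labels_node inE eqxx. Qed.

Lemma subseq_all_labels_child cs c :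
  List.In c cs -> subseq (all_labels c) (all_labels (MNode cs)).
Proof.
move=> /(subseq_flatten_map_In (@all_labels N)) sub_c.
by rewrite all_labels_node (subseq_trans sub_c) ?subseq_cons.
Qed.

Lemma uniq_children_labels cs :
  uniq (all_labels (MNode cs)) -> uniq (flatten (map (@all_labels N) cs)).
Proof. by rewrite all_labels_node cons_uniq => /andP []. Qed.

Lemma label_notin_child cs c :
  uniq (all_labels (MNode cs)) -> List.In c cs -> label (MNode cs) \notin all_labels c.
Proof.
rewrite all_labels_node cons_uniq => /andP [notin_cs _].
move=> /(subseq_flatten_map_In (@all_labels N)) sub_c.
by apply: contra notin_cs; apply: (mem_subseq sub_c).
Qed.

Lemma int_nodes_node (Rk : {set 'I_N} -> nat) cs pr :
  int_nodes Rk (MNode cs) pr =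
  (cs, pr) :: List.flat_map (fun c => int_nodes Rk c (Rk (label (MNode cs)))) cs.
Proof. by rewrite /=; congr (_ :: _); elim: cs => //= c cs ->. Qed.

Lemma subseq_all_labels_int_node (Rk : {set 'I_N} -> nat) t pr0 cs pr :
  List.In (cs, pr) (int_nodes Rk t pr0) -> subseq (all_labels (MNode cs)) (all_labels t).
Proof.
elim/mtree_In_ind: t pr0 => [n|ts IH] pr0 //.
rewrite int_nodes_node => -[[<- _]|/List.in_flat_map [c [tc csc]]].
  exact: subseq_refl.
apply: subseq_trans (IH c tc _ csc) _; rewrite all_labels_node.
exact: subseq_trans (subseq_flatten_map_In _ tc) (subseq_cons _ _).
Qed.

Lemma prod_children_scale (R : comPzSemiRingType) (F G : mtree N -> R) k cs c :
  List.In c cs -> uniq (flatten (map (@all_labels N) cs)) -> F c = k * G c ->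
  (forall c', List.In c' cs -> [disjoint all_labels c & all_labels c'] -> F c' = G c') ->
  \prod_(x <- cs) F x = k * \prod_(x <- cs) G x.
Proof.
move=> /(List.in_split c cs) [l1 [l2 ->]].
rewrite map_cat flatten_cat /= !cat_uniq !has_cat.
case/and5P => _ /norP [dis1 _] _ dis2 _ Fc FG_off.
rewrite !big_cat !big_cons /=.
have -> : \prod_(x <- l1) F x = \prod_(x <- l1) G x.
  apply: eq_big_In => c' l1c'; apply: FG_off.
    by apply/List.in_app_iff; left.
  rewrite disjoint_sym disjoint_has; apply: contra dis1 => /hasP [x c'x cx].
  by apply/hasP; exists x => //; apply: mem_subseq (subseq_flatten_map_In _ l1c') _ c'x.
have -> : \prod_(x <- l2) F x = \prod_(x <- l2) G x.
  apply: eq_big_In => c' l2c'; apply: FG_off.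
    by apply/List.in_app_iff; right; right.
  rewrite disjoint_has; apply: contra dis2 => /hasP [x cx c'x].
  by apply/hasP; exists x => //; apply: mem_subseq (subseq_flatten_map_In _ l2c') _ c'x.
by rewrite Fc -mulrA mulrCA.
Qed.

End ModeTrees.

Section Tensors.
Variables (R : rcfType) (N : nat) (D : 'I_N -> nat) (Rk : {set 'I_N} -> nat).
Implicit Types (W : weights R N) (t c : mtree N) (cs : seq (mtree N)).

Lemma tens_node W cs r (i : mindex D) :
  tens Rk W (MNode cs) r i =
  \sum_(r' < Rk (label (MNode cs))) W (label (MNode cs)) r' r *
    \prod_(c <- cs) tens Rk W c r' i.
Proof. by apply: eq_bigr => r' _; rewrite -fix_prod_big. Qed.

Lemma tens_repl_node W nu g cs r (i : mindex D) :
  tens_repl Rk W nu g (MNode cs) r i =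
  if label (MNode cs) == nu then g r i else
  \sum_(r' < Rk (label (MNode cs))) W (label (MNode cs)) r' r *
    \prod_(c <- cs) tens_repl Rk W nu g c r' i.
Proof.
by rewrite /=; case: ifP => // _; apply: eq_bigr => r' _; rewrite -fix_prod_big.
Qed.

Lemma eq_tens W W' t :
  {in all_labels t, forall mu, W' mu =2 W mu} ->
  forall r (i : mindex D), tens Rk W' t r i = tens Rk W t r i.
Proof.
elim/mtree_In_ind: t => [n|cs IH] eqW r i; first by rewrite /= eqW // inE.
rewrite !tens_node; apply: eq_bigr => r' _; rewrite eqW ?label_in_all_labels //.
congr (_ * _); apply: eq_big_In => c csc; apply: IH => // mu.
by move=> /(mem_subseq (subseq_all_labels_child csc)); apply: eqW.
Qed.

Lemma tens_repl_notin W nu g t :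
  nu \notin all_labels t ->
  forall r (i : mindex D), tens_repl Rk W nu g t r i = tens Rk W t r i.
Proof.
elim/mtree_In_ind: t => [n|cs IH] nu_t r i //.
rewrite tens_repl_node tens_node ifF; last first.
  by apply: contraNF nu_t => /eqP <-; apply: label_in_all_labels.
apply: eq_bigr => r' _; congr (_ * _); apply: eq_big_In => c csc; apply: (IH c csc).
by apply: contra nu_t; exact: (mem_subseq (subseq_all_labels_child csc)).
Qed.

Lemma tens_int_node_scale W W' a g t pr0 cs pr :
  List.In (cs, pr) (int_nodes Rk t pr0) -> uniq (all_labels t) ->
  (forall mu, mu \notin all_labels (MNode cs) -> W' mu =2 W mu) ->
  (forall r (j : mindex D), (r < pr)%N -> tens Rk W' (MNode cs) r j = a * g r j) ->
  forall r0 (i : mindex D), (r0 < pr0)%N ->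
  tens Rk W' t r0 i = a * tens_repl Rk W (label (MNode cs)) g t r0 i.
Proof.
move=> + + eqW_off node_scale; elim/mtree_In_ind: t pr0 => [n|ts IH] pr0 //.
rewrite int_nodes_node => -[[-> ->] _ r0 i lt_r0|].
  by rewrite tens_repl_node eqxx node_scale.
move=> /List.in_flat_map [c [tsc int_c]] uniq_ts r0 i lt_r0.
have sub_c := subseq_all_labels_int_node int_c.
have nu_c := mem_subseq sub_c (label_in_all_labels (MNode cs)).
have ts_notin_c := label_notin_child uniq_ts tsc.
rewrite tens_repl_node tens_node ifF; last by apply: contraNF ts_notin_c => /eqP ->.
rewrite mulr_sumr; apply: eq_bigr => r' _.
rewrite eqW_off; last by apply: contra ts_notin_c; apply: (mem_subseq sub_c).
rewrite mulrCA; congr (_ * _).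
apply: (prod_children_scale tsc (uniq_children_labels uniq_ts)).
  apply: (IH c tsc _ int_c) => //.
  exact: subseq_uniq (subseq_all_labels_child tsc) uniq_ts.
move=> c' _ dis_c'; rewrite tens_repl_notin ?(disjointFr dis_c' nu_c) //.
apply: eq_tens => mu mu_c'; apply: eqW_off; apply: contraL mu_c'.
by move=> /(mem_subseq sub_c) mu_c; rewrite (disjointFr dis_c' mu_c).
Qed.

Lemma col_norm_eq0_tens W c r (j : mindex D) :
  col_norm W (label c) (node_rank D Rk c) r = 0 -> tens Rk W c r j = 0.
Proof.
move=> /(sqrt_sum_sqr_eq0 (f := fun a => W (label c) a r)) col0.
case: c col0 => [n|cs] col0; first exact: col0.
by rewrite tens_node big1 // => r' _; rewrite col0 ?mul0r.
Qed.

Definition local_component W cs r r'' (j : mindex D) : R :=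
  W (label (MNode cs)) r r'' * \prod_(c <- cs) tens Rk W c r j.

Lemma local_component_sigma_eq0 W cs pr r r'' (j : mindex D) :
  sigma D Rk W cs pr r = 0 -> (r'' < pr)%N -> local_component W cs r r'' j = 0.
Proof.
move=> /eqP; rewrite mulf_eq0 => /orP [/eqP row0|/eqP cols0] lt_r''.
  by rewrite /local_component (sqrt_sum_sqr_eq0 row0) ?mul0r.
by rewrite /local_component (prodf_eq0_sub _ cols0) ?mulr0 // => c /col_norm_eq0_tens.
Qed.

Lemma end_tensor_local_component W W' T cs pr r :
  uniq (all_labels T) -> List.In (cs, pr) (int_nodes Rk T 1) ->
  (forall mu, mu \notin all_labels (MNode cs) -> W' mu =2 W mu) ->
  (forall r'' (j : mindex D),
     tens Rk W' (MNode cs) r'' j = local_component W cs r r'' j) ->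
  forall i : mindex D,
  end_tensor Rk W' T i = sigma D Rk W cs pr r * Eten D Rk W T cs pr r i.
Proof.
move=> uniq_T int_cs eqW_off node_eq i; rewrite /end_tensor /Eten.
have [s0|s_neq0] := eqVneq (sigma D Rk W cs pr r) 0.
  rewrite s0 mul0r.
  rewrite (tens_int_node_scale (a := 0) (g := fun _ _ => 0) int_cs uniq_T eqW_off)
    ?mul0r //.
  by move=> r'' j lt_r''; rewrite node_eq (local_component_sigma_eq0 _ s0).
apply: (tens_int_node_scale int_cs uniq_T eqW_off) => // r'' j _.
by rewrite node_eq -mulrA mulVKf.
Qed.

Lemma keep_row_neq W nu r mu : mu != nu -> keep_row W nu r mu =2 W mu.
Proof. by move=> /negbTE mu_nu a b; rewrite /keep_row mu_nu. Qed.

Lemma keep_col_neq W nu r mu : mu != nu -> keep_col W nu r mu =2 W mu.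
Proof. by move=> /negbTE mu_nu a b; rewrite /keep_col mu_nu. Qed.

Lemma tens_keep_row_node W cs r r'' (j : mindex D) :
  uniq (all_labels (MNode cs)) -> (r < Rk (label (MNode cs)))%N ->
  tens Rk (keep_row W (label (MNode cs)) r) (MNode cs) r'' j =
  local_component W cs r r'' j.
Proof.
move=> uniq_cs lt_r.
rewrite tens_node (sum_ord_delta lt_r) => [|r' /negbTE r'_r]; last first.
  by rewrite /keep_row eqxx r'_r mul0r.
rewrite /keep_row !eqxx; congr (_ * _); apply: eq_big_In => c csc.
apply: eq_tens => mu mu_c; apply: keep_row_neq.
by apply: contraNneq (label_notin_child uniq_cs csc) => <-.
Qed.

Lemma tens_keep_col_child W c r r' (j : mindex D) :
  uniq (all_labels c) ->
  tens Rk (keep_col W (label c) r) c r' j = (r' == r)%:R * tens Rk W c r' j.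
Proof.
case: c => [n|cs] uniq_c.
  by rewrite /= /keep_col eqxx; case: eqP; rewrite ?mul1r ?mul0r.
rewrite !tens_node mulr_sumr; apply: eq_bigr => a _; rewrite {1}/keep_col eqxx.
have -> : \prod_(c <- cs) tens Rk (keep_col W (label (MNode cs)) r) c a j =
          \prod_(c <- cs) tens Rk W c a j.
  apply: eq_big_In => c csc; apply: eq_tens => mu mu_c; apply: keep_col_neq.
  by apply: contraNneq (label_notin_child uniq_c csc) => <-.
by case: eqP; rewrite ?mul1r ?mul0r.
Qed.

Lemma tens_keep_col_node W cs c r r'' (j : mindex D) :
  uniq (all_labels (MNode cs)) -> List.In c cs -> (r < Rk (label (MNode cs)))%N ->
  tens Rk (keep_col W (label c) r) (MNode cs) r'' j = local_component W cs r r'' j.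
Proof.
move=> uniq_cs csc lt_r.
have col_r r' : \prod_(c' <- cs) tens Rk (keep_col W (label c) r) c' r' j =
    (r' == r)%:R * \prod_(c' <- cs) tens Rk W c' r' j.
  apply: (prod_children_scale csc (uniq_children_labels uniq_cs)).
    exact/tens_keep_col_child/(subseq_uniq (subseq_all_labels_child csc)).
  move=> c' _ dis_c'; apply: eq_tens => mu mu_c'; apply: keep_col_neq.
  apply: contraTneq mu_c' => ->.
  by rewrite (disjointFr dis_c' (label_in_all_labels c)).
have nu_neq_c : label (MNode cs) != label c.
  by apply: contraNneq (label_notin_child uniq_cs csc) => ->; apply: label_in_all_labels.
rewrite tens_node (sum_ord_delta lt_r) => [|r' /negbTE r'_r].
  by rewrite keep_col_neq // col_r eqxx mul1r.
by rewrite col_r r'_r mul0r mulr0.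
Qed.

End Tensors.

Theorem lemma12 (R : rcfType) (N : nat) (D : 'I_N -> nat) (T : mtree N)
  (Rk : {set 'I_N} -> nat) (W : weights R N)
  (cs : seq (mtree N)) (pr : nat) (c : mtree N) (r : nat) :
  mode_tree T ->
  List.In (cs, pr) (int_nodes Rk T 1) ->
  List.In c cs ->
  (r < Rk (label (MNode cs)))%N ->
  (forall i : mindex D,
     end_tensor Rk (keep_row W (label (MNode cs)) r) T i =
     sigma D Rk W cs pr r * Eten D Rk W T cs pr r i) /\
  (forall i : mindex D,
     end_tensor Rk (keep_col W (label c) r) T i =
     sigma D Rk W cs pr r * Eten D Rk W T cs pr r i).
Proof.
move=> [_ _ uniq_T] int_cs csc lt_r.
have uniq_cs := subseq_uniq (subseq_all_labels_int_node int_cs) uniq_T.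
split; apply: (end_tensor_local_component uniq_T int_cs).
- move=> mu mu_notin; apply: keep_row_neq.
  by apply: contraNneq mu_notin => ->; apply: label_in_all_labels.
- by move=> r'' j; apply: tens_keep_row_node.
- move=> mu mu_notin; apply: keep_col_neq; apply: contraNneq mu_notin => ->.
  exact: (mem_subseq (subseq_all_labels_child csc) (label_in_all_labels c)).
- by move=> r'' j; apply: tens_keep_col_node.
Qed.
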